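(* Let $B(\mathbb{R})$ be the C*-algebra of all bounded complex-valued functions on $\mathbb{R}$ (pointwise operations, supremum norm), and let $A=\{f\in B(\mathbb{R}): \{t: f(t)\neq 0\}\text{ is countable}\}$. Then $A$ is a non-unital, monotone $\sigma$-complete commutative C*-algebra (so its only maximal abelian self-adjoint subalgebra, $A$ itself, is monotone $\sigma$-complete), but $A$ is not a Rickart C*-algebra.
   Context: A C*-algebra $B$ is monotone $\sigma$-complete if every norm-bounded monotone increasing sequence in $B_{sa}$ has a supremum in $B_{sa}$. A C*-algebra $B$ is Rickart if for each $a\in B$ there is a projection $p\in B$ such that $\{z\in B: az=0\}=pB$. *)

From Stdlib Require Import Reals.
Open Scope R_scope.

(** Complex numbers as (real part, imaginary part). *)
Definition C : Type := (R * R)%type.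
Definition C0 : C := (0, 0).
Definition Cadd (x y : C) : C := (fst x + fst y, snd x + snd y).
Definition Copp (x : C) : C := (- fst x, - snd x).
Definition Cmul (x y : C) : C :=
  (fst x * fst y - snd x * snd y, fst x * snd y + snd x * fst y).
Definition Cconj (x : C) : C := (fst x, - snd x).
Definition Cnorm (x : C) : R := sqrt (fst x * fst x + snd x * snd x).

Definition fadd (f g : R -> C) : R -> C := fun t => Cadd (f t) (g t).
Definition fsub (f g : R -> C) : R -> C := fun t => Cadd (f t) (Copp (g t)).
Definition fmul (f g : R -> C) : R -> C := fun t => Cmul (f t) (g t).
Definition fscal (c : C) (f : R -> C) : R -> C := fun t => Cmul c (f t).
Definition fstar (f : R -> C) : R -> C := fun t => Cconj (f t).
Definition feq (f g : R -> C) : Prop := forall t, f t = g t.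

Definition bounded (f : R -> C) : Prop := exists M, forall t, Cnorm (f t) <= M.

(** {t | f t <> 0} is countable (finite or countably infinite): it is covered
    by the range of some sequence of reals. *)
Definition countable_support (f : R -> C) : Prop :=
  exists s : nat -> R, forall t, f t <> C0 -> exists n, s n = t.

Definition inA (f : R -> C) : Prop := bounded f /\ countable_support f.

Definition unif_conv (f : nat -> R -> C) (g : R -> C) : Prop :=
  forall eps, 0 < eps -> exists N, forall n t, (N <= n)%nat ->
    Cnorm (Cadd (f n t) (Copp (g t))) <= eps.

Definition is_Cstar_subalgebra (P : (R -> C) -> Prop) : Prop :=
  (forall f, P f -> bounded f) /\
  P (fun _ => C0) /\
  (forall f g, P f -> P g -> P (fadd f g)) /\
  (forall c f, P f -> P (fscal c f)) /\
  (forall f g, P f -> P g -> P (fmul f g)) /\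
  (forall f, P f -> P (fstar f)) /\
  (forall (f : nat -> R -> C) g, (forall n, P (f n)) -> unif_conv f g -> P g).

Definition commutative_in (P : (R -> C) -> Prop) : Prop :=
  forall f g, P f -> P g -> feq (fmul f g) (fmul g f).

Definition unital_in (P : (R -> C) -> Prop) : Prop :=
  exists e, P e /\ forall f, P f -> feq (fmul e f) f /\ feq (fmul f e) f.

Definition selfadjoint (f : R -> C) : Prop := feq (fstar f) f.

(** Positive elements of this commutative function algebra: pointwise values
    in [0, +oo) (the spectrum-based positivity of a commutative algebra of
    functions, written out). *)
Definition positive (f : R -> C) : Prop := forall t, snd (f t) = 0 /\ 0 <= fst (f t).

Definition cle (f g : R -> C) : Prop := positive (fsub g f).

Definition monotone_sigma_complete (P : (R -> C) -> Prop) : Prop :=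
  forall f : nat -> R -> C,
    (forall n, P (f n) /\ selfadjoint (f n)) ->
    (exists M, forall n t, Cnorm (f n t) <= M) ->
    (forall n, cle (f n) (f (S n))) ->
    exists g, P g /\ selfadjoint g /\
      (forall n, cle (f n) g) /\
      (forall h, P h -> selfadjoint h -> (forall n, cle (f n) h) -> cle g h).

Definition projection (p : R -> C) : Prop := selfadjoint p /\ feq (fmul p p) p.

Definition rickart (P : (R -> C) -> Prop) : Prop :=
  forall a, P a -> exists p, P p /\ projection p /\
    forall z, P z ->
      (feq (fmul a z) (fun _ => C0) <-> exists w, P w /\ feq z (fmul p w)).

From Pilot Require Import Defs.
From Stdlib Require Import Reals Lra Classical IndefiniteDescription Cantor.
From Coquelicot Require Complex.

Open Scope R_scope.

(* A function with countable support vanishes somewhere, because R is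
   uncountable.  So no element of A can act as a unit on the point indicators,
   which lie in A, and no projection p of A generates the annihilator of 0,
   which is all of A, as p A.  The remaining properties are pointwise: the
   support of a uniform limit, or of the pointwise supremum of a bounded
   sequence, lies in the countable union of the supports of its terms. *)

Lemma Cnorm_Cmod (x : Defs.C) : Cnorm x = Complex.Cmod x.
Proof. unfold Cnorm, Complex.Cmod; f_equal; ring. Qed.

Lemma Cnorm_ge0 (x : Defs.C) : 0 <= Cnorm x.
Proof. rewrite Cnorm_Cmod; apply Complex.Cmod_ge_0. Qed.

Lemma Cnorm_add (x y : Defs.C) : Cnorm (Cadd x y) <= Cnorm x + Cnorm y.
Proof. rewrite !Cnorm_Cmod; apply (Complex.Cmod_triangle x y). Qed.

Lemma Cnorm_mul (x y : Defs.C) : Cnorm (Cmul x y) = Cnorm x * Cnorm y.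
Proof. rewrite !Cnorm_Cmod; apply (Complex.Cmod_mult x y). Qed.

Lemma Cnorm_conj (x : Defs.C) : Cnorm (Cconj x) = Cnorm x.
Proof. unfold Cnorm, Cconj; simpl; f_equal; ring. Qed.

Lemma Cnorm_eq0 (x : Defs.C) : Cnorm x = 0 -> x = C0.
Proof. rewrite Cnorm_Cmod; apply (Complex.Cmod_eq_0 x). Qed.

Lemma Cnorm_real (r : R) : Cnorm (r, 0) = Rabs r.
Proof.
  unfold Cnorm; simpl.
  replace (r * r + 0 * 0) with (Rsqr r) by (unfold Rsqr; ring).
  apply sqrt_Rsqr_abs.
Qed.

Lemma Cnorm_C0 : Cnorm C0 = 0.
Proof. unfold C0; rewrite Cnorm_real; apply Rabs_R0. Qed.

Lemma Cnorm_opp (x : Defs.C) : Cnorm (Copp x) = Cnorm x.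
Proof. unfold Cnorm, Copp; simpl; f_equal; ring. Qed.

Lemma Cnorm_le_add_sub (x y : Defs.C) : Cnorm y <= Cnorm x + Cnorm (Cadd x (Copp y)).
Proof.
  rewrite <- (Cnorm_opp (Cadd x (Copp y))).
  replace y with (Cadd x (Copp (Cadd x (Copp y)))) at 1
    by (destruct x, y; unfold Cadd, Copp; simpl; f_equal; ring).
  apply Cnorm_add.
Qed.

Lemma Rabs_fst_le_Cnorm (x : Defs.C) : Rabs (fst x) <= Cnorm x.
Proof.
  rewrite <- sqrt_Rsqr_abs; apply sqrt_le_1_alt; unfold Rsqr; nra.
Qed.

Definition countable (P : R -> Prop) : Prop :=
  exists s : nat -> R, forall t, P t -> exists n, s n = t.

Lemma countable_sub (P Q : R -> Prop) :
  countable P -> (forall t, Q t -> P t) -> countable Q.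
Proof. intros [s Hs] HQP; exists s; intros t Ht; apply Hs, HQP, Ht. Qed.

Lemma countable_bigcup (P : nat -> R -> Prop) :
  (forall k, countable (P k)) -> countable (fun t => exists k, P k t).
Proof.
  intros HP.
  destruct (functional_choice (fun k s => forall t, P k t -> exists n, s n = t) HP) as [s Hs].
  exists (fun m => s (fst (of_nat m)) (snd (of_nat m))).
  intros t [k Hk]; destruct (Hs k t Hk) as [n Hn].
  exists (to_nat (k, n)); rewrite cancel_of_to; exact Hn.
Qed.

Lemma countable_union (P Q : R -> Prop) :
  countable P -> countable Q -> countable (fun t => P t \/ Q t).
Proof.
  intros HP HQ.
  apply (countable_sub (fun t => exists k, match k with O => P t | S _ => Q t end)).
  - apply countable_bigcup; intros [|k]; assumption.
  - intros t [Ht|Ht]; [exists O | exists 1%nat]; exact Ht.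
Qed.

(* Nested thirds: the [n]-th interval avoids [u n], and the supremum of the
   left endpoints lies in all of them. *)
Fixpoint avoiding_interval (u : nat -> R) (n : nat) : R * R :=
  match n with
  | O => (0, 1)
  | S k =>
      let I := avoiding_interval u k in
      if Rlt_dec ((2 * fst I + snd I) / 3) (u k)
      then (fst I, (2 * fst I + snd I) / 3)
      else ((fst I + 2 * snd I) / 3, snd I)
  end.

Lemma avoiding_interval_nonempty (u : nat -> R) (n : nat) :
  fst (avoiding_interval u n) < snd (avoiding_interval u n).
Proof. induction n; simpl; [lra | destruct Rlt_dec; simpl; lra]. Qed.

Lemma avoiding_interval_step (u : nat -> R) (n : nat) :
  fst (avoiding_interval u n) <= fst (avoiding_interval u (S n)) /\
  snd (avoiding_interval u (S n)) <= snd (avoiding_interval u n) /\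
  ~ (fst (avoiding_interval u (S n)) <= u n <= snd (avoiding_interval u (S n))).
Proof.
  pose proof (avoiding_interval_nonempty u n); simpl; destruct Rlt_dec; simpl; lra.
Qed.

Lemma avoiding_interval_nested (u : nat -> R) (n k : nat) :
  fst (avoiding_interval u n) <= fst (avoiding_interval u (k + n)) /\
  snd (avoiding_interval u (k + n)) <= snd (avoiding_interval u n).
Proof.
  induction k as [|k IH]; simpl; [lra|].
  pose proof (avoiding_interval_step u (k + n)); simpl in *; lra.
Qed.

Lemma avoiding_interval_left_le_right (u : nat -> R) (m n : nat) :
  fst (avoiding_interval u m) <= snd (avoiding_interval u n).
Proof.
  destruct (Nat.le_ge_cases m n) as [Hmn|Hnm].
  - destruct (Nat.le_exists_sub m n Hmn) as [k [-> _]].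
    pose proof (avoiding_interval_nested u m k).
    pose proof (avoiding_interval_nonempty u (k + m)); lra.
  - destruct (Nat.le_exists_sub n m Hnm) as [k [-> _]].
    pose proof (avoiding_interval_nested u n k).
    pose proof (avoiding_interval_nonempty u (k + n)); lra.
Qed.

Lemma R_not_sequence_range (u : nat -> R) : exists t, forall n, u n <> t.
Proof.
  set (E := fun r => exists n, r = fst (avoiding_interval u n)).
  assert (HE : bound E).
  { exists 1; intros r [n ->]; apply (avoiding_interval_left_le_right u n O). }
  destruct (completeness E HE (ex_intro _ 0 (ex_intro _ O eq_refl))) as [x [Hub Hlub]].
  exists x; intros n Hn.
  assert (Hleft : fst (avoiding_interval u (S n)) <= x) by (apply Hub; exists (S n); auto).
  assert (Hright : x <= snd (avoiding_interval u (S n))).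
  { apply Hlub; intros r [m ->]; apply avoiding_interval_left_le_right. }
  destruct (avoiding_interval_step u n) as [_ [_ Havoid]].
  apply Havoid; rewrite Hn; lra.
Qed.

Lemma countable_not_all (P : R -> Prop) : countable P -> exists t, ~ P t.
Proof.
  intros [s Hs]; destruct (R_not_sequence_range s) as [t Ht].
  exists t; intros Pt; destruct (Hs t Pt) as [n Hn]; exact (Ht n Hn).
Qed.

Lemma countable_support_vanishes (f : R -> Defs.C) :
  countable_support f -> exists t, f t = C0.
Proof.
  intros Hf; destruct (countable_not_all _ Hf) as [t Ht].
  exists t; apply NNPP, Ht.
Qed.

Lemma countable_support_sub (f g : R -> Defs.C) :
  countable_support f -> (forall t, f t = C0 -> g t = C0) -> countable_support g.
Proof.
  intros Hf Hfg; apply (countable_sub _ _ Hf).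
  intros t Hg Hf0; exact (Hg (Hfg t Hf0)).
Qed.

Lemma countable_support_add (f g : R -> Defs.C) :
  countable_support f -> countable_support g -> countable_support (fadd f g).
Proof.
  intros Hf Hg; apply (countable_sub _ _ (countable_union _ _ Hf Hg)).
  intros t Hfg; apply NNPP; intros [Hf0 Hg0]%not_or_and.
  apply Hfg; unfold fadd; rewrite (NNPP _ Hf0), (NNPP _ Hg0).
  unfold Cadd, C0; simpl; f_equal; ring.
Qed.

Lemma countable_support_limit (f : nat -> R -> Defs.C) (g : R -> Defs.C) :
  (forall n, countable_support (f n)) ->
  (forall t, (forall n, f n t = C0) -> g t = C0) -> countable_support g.
Proof.
  intros Hf Hg.
  apply (countable_sub _ _ (countable_bigcup (fun n t => f n t <> C0) Hf)).
  intros t Hgt; apply NNPP; intros Hnone.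
  apply Hgt, Hg; intros n; apply NNPP; intros Hn; apply Hnone; exists n; exact Hn.
Qed.

Lemma bounded_unif_limit (f : nat -> R -> Defs.C) (g : R -> Defs.C) :
  (forall n, Defs.bounded (f n)) -> unif_conv f g -> Defs.bounded g.
Proof.
  intros Hf Hfg; destruct (Hfg 1 Rlt_0_1) as [N HN]; destruct (Hf N) as [M HM].
  exists (M + 1); intros t.
  pose proof (Cnorm_le_add_sub (f N t) (g t)); pose proof (HM t).
  pose proof (HN N t (le_n N)); lra.
Qed.

Lemma unif_limit_vanishes (f : nat -> R -> Defs.C) (g : R -> Defs.C) (t : R) :
  unif_conv f g -> (forall n, f n t = C0) -> g t = C0.
Proof.
  intros Hfg Hft; apply Cnorm_eq0, Rle_antisym; [|apply Cnorm_ge0].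
  apply Rnot_lt_le; intros Hpos.
  destruct (Hfg (Cnorm (g t) / 2) ltac:(lra)) as [N HN].
  pose proof (HN N t (le_n N)) as Hclose; rewrite Hft in Hclose.
  pose proof (Cnorm_le_add_sub C0 (g t)); rewrite Cnorm_C0 in *; lra.
Qed.

Lemma inA_zero : inA (fun _ => C0).
Proof.
  split.
  - exists 0; intros t; rewrite Cnorm_C0; apply Rle_refl.
  - exists (fun _ => 0); intros t Ht; contradiction.
Qed.

Lemma inA_add (f g : R -> Defs.C) : inA f -> inA g -> inA (fadd f g).
Proof.
  intros [[Mf Hf] Sf] [[Mg Hg] Sg]; split.
  - exists (Mf + Mg); intros t; unfold fadd.
    pose proof (Cnorm_add (f t) (g t)); pose proof (Hf t); pose proof (Hg t); lra.
  - exact (countable_support_add f g Sf Sg).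
Qed.

Lemma inA_scal (c : Defs.C) (f : R -> Defs.C) : inA f -> inA (fscal c f).
Proof.
  intros [[M HM] Sf]; split.
  - exists (Cnorm c * M); intros t; unfold fscal; rewrite Cnorm_mul.
    apply Rmult_le_compat_l; [apply Cnorm_ge0 | apply HM].
  - apply (countable_support_sub _ _ Sf); intros t Hft.
    unfold fscal; rewrite Hft; unfold Cmul, C0; simpl; f_equal; ring.
Qed.

Lemma inA_mul (f g : R -> Defs.C) : inA f -> inA g -> inA (fmul f g).
Proof.
  intros [[Mf Hf] Sf] [[Mg Hg] _]; split.
  - exists (Mf * Mg); intros t; unfold fmul; rewrite Cnorm_mul.
    apply Rmult_le_compat; auto using Cnorm_ge0.
  - apply (countable_support_sub _ _ Sf); intros t Hft.
    unfold fmul; rewrite Hft; unfold Cmul, C0; simpl; f_equal; ring.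
Qed.

Lemma inA_star (f : R -> Defs.C) : inA f -> inA (fstar f).
Proof.
  intros [[M HM] Sf]; split.
  - exists M; intros t; unfold fstar; rewrite Cnorm_conj; apply HM.
  - apply (countable_support_sub _ _ Sf); intros t Hft.
    unfold fstar; rewrite Hft; unfold Cconj, C0; simpl; f_equal; ring.
Qed.

Lemma inA_unif_limit (f : nat -> R -> Defs.C) (g : R -> Defs.C) :
  (forall n, inA (f n)) -> unif_conv f g -> inA g.
Proof.
  intros Hf Hfg; split.
  - exact (bounded_unif_limit f g (fun n => proj1 (Hf n)) Hfg).
  - apply (countable_support_limit f g (fun n => proj2 (Hf n))).
    intros t; exact (unif_limit_vanishes f g t Hfg).
Qed.

Lemma inA_Cstar_subalgebra : is_Cstar_subalgebra inA.
Proof.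
  split; [intros f [Hf _]; exact Hf|].
  split; [exact inA_zero|].
  split; [exact inA_add|].
  split; [exact inA_scal|].
  split; [exact inA_mul|].
  split; [exact inA_star|].
  exact inA_unif_limit.
Qed.

Lemma inA_commutative : commutative_in inA.
Proof. intros f g _ _ t; unfold fmul, Cmul; f_equal; ring. Qed.

Lemma selfadjoint_snd (f : R -> Defs.C) (t : R) : selfadjoint f -> snd (f t) = 0.
Proof. intros Hf; pose proof (f_equal snd (Hf t)) as E; simpl in E; lra. Qed.

Lemma cle_selfadjoint (f g : R -> Defs.C) :
  selfadjoint f -> selfadjoint g -> cle f g <-> forall t, fst (f t) <= fst (g t).
Proof.
  intros Hf Hg; unfold cle, Defs.positive, fsub, Cadd, Copp; simpl; split.
  - intros H t; destruct (H t); lra.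
  - intros H t; rewrite (selfadjoint_snd f t Hf), (selfadjoint_snd g t Hg).
    specialize (H t); split; lra.
Qed.

Section PointwiseSupremum.

Variable f : nat -> R -> Defs.C.
Variable M : R.
Hypothesis f_bounded : forall n t, Cnorm (f n t) <= M.

Lemma Rabs_fst_le_bound (n : nat) (t : R) : Rabs (fst (f n t)) <= M.
Proof. exact (Rle_trans _ _ _ (Rabs_fst_le_Cnorm (f n t)) (f_bounded n t)). Qed.

Definition values_at (t : R) (r : R) : Prop := exists n, r = fst (f n t).

Lemma values_at_bound (t : R) : bound (values_at t).
Proof.
  exists M; intros r [n ->]; exact (Rle_trans _ _ _ (Rle_abs _) (Rabs_fst_le_bound n t)).
Qed.

Definition pointwise_sup (t : R) : R :=
  proj1_sig (completeness (values_at t) (values_at_bound t)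
               (ex_intro _ _ (ex_intro _ O eq_refl))).

Lemma pointwise_sup_is_lub (t : R) : is_lub (values_at t) (pointwise_sup t).
Proof. unfold pointwise_sup; destruct (completeness (values_at t) _ _) as [s Hs]; exact Hs. Qed.

Lemma le_pointwise_sup (n : nat) (t : R) : fst (f n t) <= pointwise_sup t.
Proof. apply (pointwise_sup_is_lub t); exists n; reflexivity. Qed.

Lemma pointwise_sup_le (t r : R) : (forall n, fst (f n t) <= r) -> pointwise_sup t <= r.
Proof. intros Hr; apply (pointwise_sup_is_lub t); intros x [n ->]; apply Hr. Qed.

Lemma Rabs_pointwise_sup_le (t : R) : Rabs (pointwise_sup t) <= M.
Proof.
  apply Rabs_le; split.
  - pose proof (Rabs_fst_le_bound O t); pose proof (le_pointwise_sup O t).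
    pose proof (Rle_abs (- fst (f O t))); rewrite Rabs_Ropp in *; lra.
  - apply pointwise_sup_le; intros n; pose proof (Rabs_fst_le_bound n t).
    pose proof (Rle_abs (fst (f n t))); lra.
Qed.

End PointwiseSupremum.

(* The supremum is taken pointwise. *)
Lemma inA_monotone_sigma_complete : monotone_sigma_complete inA.
Proof.
  intros f Hf [M HM] _.
  assert (Hsa : forall n, selfadjoint (f n)) by (intros n; apply Hf).
  assert (Hsup_sa : selfadjoint (fun t => (pointwise_sup f M HM t, 0))).
  { intros t; unfold fstar, Cconj; simpl; f_equal; ring. }
  exists (fun t => (pointwise_sup f M HM t, 0)); split; [split|split; [exact Hsup_sa|split]].
  - exists M; intros t; rewrite Cnorm_real; apply Rabs_pointwise_sup_le.
  - apply (countable_support_limit f _ (fun n => proj2 (proj1 (Hf n)))).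
    intros t Hft; unfold C0; f_equal; apply Rle_antisym.
    + apply pointwise_sup_le; intros n; rewrite Hft; apply Rle_refl.
    + pose proof (le_pointwise_sup f M HM O t) as H0; rewrite Hft in H0; exact H0.
  - intros n; apply cle_selfadjoint; auto; intros t; apply le_pointwise_sup.
  - intros h _ Hhsa Hle; apply cle_selfadjoint; auto; intros t; apply pointwise_sup_le.
    intros n; exact (proj1 (cle_selfadjoint _ _ (Hsa n) Hhsa) (Hle n) t).
Qed.

Definition point_indicator (t0 : R) : R -> Defs.C :=
  fun t => if Req_EM_T t t0 then (1, 0) else C0.

Lemma inA_point_indicator (t0 : R) : inA (point_indicator t0).
Proof.
  unfold point_indicator; split.
  - exists 1; intros t; destruct (Req_EM_T t t0).
    + rewrite Cnorm_real, Rabs_R1; apply Rle_refl.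
    + rewrite Cnorm_C0; apply Rle_0_1.
  - exists (fun _ => t0); intros t Ht; exists O.
    destruct (Req_EM_T t t0); [congruence | contradiction].
Qed.

Lemma point_indicator_not_multiple (e w : R -> Defs.C) (t0 : R) :
  e t0 = C0 -> ~ feq (point_indicator t0) (fmul e w).
Proof.
  intros He Heq; specialize (Heq t0); unfold point_indicator, fmul in Heq.
  destruct (Req_EM_T t0 t0) as [_|]; [|contradiction].
  rewrite He in Heq; unfold Cmul, C0 in Heq; simpl in Heq.
  injection Heq; lra.
Qed.

Lemma inA_not_unital : ~ unital_in inA.
Proof.
  intros [e [[_ Se] He]]; destruct (countable_support_vanishes e Se) as [t0 Ht0].
  apply (point_indicator_not_multiple e (point_indicator t0) t0 Ht0).
  intros t; symmetry; apply (He _ (inA_point_indicator t0)).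
Qed.

Lemma inA_not_rickart : ~ rickart inA.
Proof.
  intros Hr; destruct (Hr _ inA_zero) as [p [[_ Sp] [_ Hp]]].
  destruct (countable_support_vanishes p Sp) as [t0 Ht0].
  destruct (proj1 (Hp _ (inA_point_indicator t0))) as [w [_ Hw]].
  - intros t; unfold fmul, Cmul, C0; simpl; f_equal; ring.
  - exact (point_indicator_not_multiple p w t0 Ht0 Hw).
Qed.

Theorem mainTheorem11 :
  is_Cstar_subalgebra inA /\ commutative_in inA /\ ~ unital_in inA /\
  monotone_sigma_complete inA /\ ~ rickart inA.
Proof.
  split; [exact inA_Cstar_subalgebra|].
  split; [exact inA_commutative|].
  split; [exact inA_not_unital|].
  split; [exact inA_monotone_sigma_complete|].
  exact inA_not_rickart.
Qed.
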